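(* Let $\zeta>0$ and let $G=(\mathcal{Y},E,f)$ be a curl consistent weighted digraph. Then there exists a weighted digraph $G'=(\mathcal{Y}\cup\mathcal{Y}',E',f')$ with $\mathcal{Y}'\cap\mathcal{Y}=\emptyset$ and $E\cap E'=\emptyset$ such that (1) for every $e=(C^{(i)},C^{(j)})\in E$, the synthetic expert between $C^{(i)}$ and $C^{(j)}$ in $G'$ is $\zeta$-accurate and $f(e)$ lies in its bound interval $(L_{G'}(i,j),U_{G'}(i,j))$; and (2) $G'$ is curl consistent.
   Context: A weighted digraph $H=(V,E_H,h)$ has $E_H$ a set of ordered pairs of distinct vertices and $h:E_H\to\mathbb{R}$, extended by $h(b,a)=1-h(a,b)$; edges may be traversed in either direction with this convention. A cycle is a sequence of $\ell\ge3$ pairwise distinct vertices $(c_1,\dots,c_\ell)$ with consecutive pairs and $(c_\ell,c_1)$ edges (either direction); its curl is $h(c_\ell,c_1)+\sum_{t<\ell}h(c_t,c_{t+1})$. $H$ is curl consistent if every cycle of length $\ell$ has curl strictly between $1$ and $\ell-1$. A path is a sequence of pairwise distinct vertices with consecutive pairs edges; its weight $W(H,B)$ is the sum of $h$ over its consecutive pairs. For vertices $a,b$ with neither $(a,b)$ nor $(b,a)$ an edge of $H$, let $U_H(a,b)=\min W(H,B)$ over paths $B$ from $a$ to $b$ and $L_H(a,b)=1-\min W(H,\overline{B})$ over paths $\overline{B}$ from $b$ to $a$ (minimum over the empty set is $+\infty$); the synthetic expert between $a$ and $b$ is called $\zeta$-accurate if $U_H(a,b)-L_H(a,b)\le\zeta$,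 i.e. its bound interval is contained in $(L,L+\zeta]$ for some $L$. *)

From HB Require Import structures.
From mathcomp Require Import all_boot all_order all_algebra.
Set Implicit Arguments. Unset Strict Implicit. Unset Printing Implicit Defensive.
Import Order.TTheory GRing.Theory Num.Theory.
Local Open Scope ring_scope.

(* A weighted digraph H = (V, E_H, h): a finite vertex list, a finite list of
   ordered edges, and a weight h; only the values of h on E_H matter. *)
Record wdigraph (T : eqType) (R : Type) := WDigraph {
  wverts : seq T;
  wedges : seq (T * T);
  wgt : T * T -> R }.

Section Defs.
Variables (R : numDomainType) (T : eqType).
Implicit Types (H : wdigraph T R).

(* Well-formedness: edges join distinct vertices of V, and no pair is an edge
   in both directions (so that h(b,a) := 1 - h(a,b) is consistent). *)
Definition wf H : Prop :=
  forall a b, (a, b) \in wedges H ->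
    [/\ a != b, a \in wverts H, b \in wverts H & (b, a) \notin wedges H].

Definition adj H (a b : T) : bool :=
  ((a, b) \in wedges H) || ((b, a) \in wedges H).

Definition hext H (a b : T) : R :=
  if (a, b) \in wedges H then wgt H (a, b) else 1 - wgt H (b, a).

Definition is_path H (a b : T) (s : seq T) : bool :=
  [&& uniq (a :: s), path (adj H) a s & last a s == b].

Definition pathW H (a : T) (s : seq T) : R :=
  \sum_(e <- zip (a :: s) s) hext H e.1 e.2.

Definition is_wcycle H (c : seq T) : bool :=
  [&& (3 <= size c)%N, uniq c & cycle (adj H) c].

Definition curl H (c : seq T) : R :=
  \sum_(e <- zip c (rot 1 c)) hext H e.1 e.2.

Definition curl_consistent H : Prop :=
  forall c, is_wcycle H c -> 1 < curl H c < (size c)%:R - 1.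

Definition min_pathW H (a b : T) (m : R) : Prop :=
  (exists s, is_path H a b s /\ pathW H a s = m) /\
  (forall s, is_path H a b s -> m <= pathW H a s).

Definition synth_defined H (a b : T) : Prop := ~~ adj H a b.

(* U_H(a,b) - L_H(a,b) <= zeta, with U_H(a,b) = min W over paths a -> b and
   L_H(a,b) = 1 - min W over paths b -> a (both finite) *)
Definition zeta_accurate H (a b : T) (zeta : R) : Prop :=
  exists U M, [/\ min_pathW H a b U, min_pathW H b a M & U - (1 - M) <= zeta].

Definition in_bound_interval H (a b : T) (y : R) : Prop :=
  exists U M, [/\ min_pathW H a b U, min_pathW H b a M & 1 - M < y < U].

End Defs.

From HB Require Import structures.
From mathcomp Require Import all_boot all_order all_algebra.
From mathcomp Require Import ring lra.
Set Implicit Arguments.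
Unset Strict Implicit.
Unset Printing Implicit Defensive.

Import Order.TTheory GRing.Theory Num.Theory.
Local Open Scope ring_scope.

(* Subdivide every edge (p, q) of G, of weight f, twice: p -> x -> q through two
   fresh vertices x.  Choosing the weights so that one detour weighs f + eps from
   p to q and the other weighs 1 - f + eps from q to p makes U - L <= 2 eps <= zeta.
   Conversely a path of G' between old vertices alternates old and new vertices,
   so it projects onto a path of G, and each detour a -> x -> b weighs strictly
   between h(a,b) and h(a,b) + 1.  Closing the projected path by an edge of G and
   using curl consistency of G then gives U > f > L, and shows that a cycle of G'
   with k old vertices has curl strictly between 1 and 2k - 1. *)

Section PathWeights.
Variables (R : numDomainType) (T : eqType) (H : wdigraph T R).

Lemma pathW_nil a : pathW H a [::] = 0.
Proof. by rewrite /pathW big_nil. Qed.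

Lemma pathW_cons a u s : pathW H a (u :: s) = hext H a u + pathW H u s.
Proof. by rewrite /pathW big_cons. Qed.

Lemma pathW_rcons a s x : pathW H a (rcons s x) = pathW H a s + hext H (last a s) x.
Proof.
elim: s a => [|u s IHs] a; first by rewrite /pathW /= big_seq1 big_nil add0r.
by rewrite rcons_cons !pathW_cons IHs addrA.
Qed.

Lemma curl_cons a s : curl H (a :: s) = pathW H a s + hext H (last a s) a.
Proof.
rewrite /curl rot1_cons -pathW_rcons /pathW; congr (\sum_(e <- _) _).
by elim: s {1 3}a => [|u s IHs] b //=; rewrite IHs.
Qed.

Lemma curl_rcons a s : curl H (rcons s a) = curl H (a :: s).
Proof.
case: s => [|u s] //; rewrite rcons_cons !curl_cons pathW_rcons pathW_cons last_rcons.
by rewrite /= addrC addrA.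
Qed.

Lemma is_wcycle_rcons a s : is_wcycle H (rcons s a) = is_wcycle H (a :: s).
Proof. by rewrite -rot1_cons /is_wcycle size_rot rot_uniq rot_cycle. Qed.

Lemma adjC a b : adj H a b = adj H b a.
Proof. by rewrite /adj orbC. Qed.

Lemma hext_edge a b : (a, b) \in wedges H -> hext H a b = wgt H (a, b).
Proof. by rewrite /hext => ->. Qed.

Lemma hext_rev_edge a b :
  wf H -> (a, b) \in wedges H -> hext H b a = 1 - wgt H (a, b).
Proof. by move=> wfH ab; have [_ _ _ /negbTE ba] := wfH _ _ ab; rewrite /hext ba. Qed.

Lemma hext_add_rev a b : wf H -> adj H a b -> hext H a b + hext H b a = 1.
Proof.
move=> wfH /orP[] e; rewrite (hext_edge e) (hext_rev_edge wfH e); ring.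
Qed.

Lemma adj_neq a b : wf H -> adj H a b -> a != b.
Proof. by move=> wfH /orP[] /wfH[] //; rewrite eq_sym. Qed.

Lemma is_path_neq a b s : is_path H a b s -> s != [::] -> a != b.
Proof.
case: s => [|x s] // /and3P[/andP[ax _] _ /eqP <-] _.
by apply: contraNneq ax => {1}->; exact: mem_last x s.
Qed.

Lemma path_sub_verts a s : wf H -> path (adj H) a s -> {subset s <= wverts H}.
Proof.
move=> wfH; elim: s a => [|u s IHs] a //= /andP[au /IHs us] x.
rewrite inE => /predU1P[-> | /us //].
by case/orP: au => /wfH[].
Qed.

End PathWeights.

Fixpoint seqs_upto (T : Type) (V : seq T) (n : nat) : seq (seq T) :=
  if n is n'.+1 then [::] :: [seq x :: s | x <- V, s <- seqs_upto V n']
  else [:: [::]].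

Lemma seqs_uptoP (T : eqType) (V s : seq T) n :
  {subset s <= V} -> (size s <= n)%N -> s \in seqs_upto V n.
Proof.
elim: n s => [|n IHn] [|x s] sV //= sz; rewrite ?mem_head // inE.
apply/orP; right; apply: (allpairs_f (fun x s => x :: s)); first exact/sV/mem_head.
by apply: IHn => // y ys; apply/sV; rewrite inE ys orbT.
Qed.

Lemma min_pathW_exists (R : realDomainType) (T : eqType) (H : wdigraph T R) a b s0 :
  wf H -> is_path H a b s0 -> exists m, min_pathW H a b m.
Proof.
move=> wfH ps0.
set paths := seqs_upto (wverts H) (size (wverts H)).
have pathsP s : is_path H a b s -> s \in paths.
  case/and3P=> /= /andP[_ us] /(path_sub_verts wfH) sV _.
  exact/seqs_uptoP/(uniq_leq_size us).
exists (\big[Num.min/pathW H a s0]_(s <- paths | is_path H a b s) pathW H a s).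
split=> [|s ps]; last exact: ge_bigmin_seq (pathsP _ ps) ps.
apply: (big_ind (fun m => exists s, is_path H a b s /\ pathW H a s = m)).
- by exists s0.
- by move=> _ _ [s [ps <-]] [t [pt <-]]; rewrite minEle; case: ifP; eauto.
- by move=> s ps; exists s.
Qed.

Lemma curl_closed_path_bounds (R : realDomainType) (T : eqType) (G : wdigraph T R) a b s :
  wf G -> curl_consistent G -> is_path G a b s -> s != [::] -> adj G b a ->
  1 <= curl G (a :: s) <= (size s)%:R.
Proof.
(* the bounds are weak because of the closed walk a -> b -> a, of curl exactly 1 *)
move=> wfG ccG /and3P[us ps /eqP lb] + ba; case: s => [|x [|y t]] // in us ps lb * => _.
  move: ps => /= /andP[ax _]; rewrite curl_cons pathW_cons pathW_nil addr0 /=.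
  by rewrite (hext_add_rev wfG ax) lexx.
have cyc : is_wcycle G [:: a, x, y & t].
  by rewrite /is_wcycle us /cycle rcons_path ps lb ba.
have /andP[lo hi] := ccG _ cyc.
move: hi; rewrite (_ : size _ = (size [:: x, y & t]).+1) // -addn1 natrD => hi.
by apply/andP; split; lra.
Qed.

Definition get_inl (A B : Type) (x : (A + B)%type) : option A :=
  if x is inl a then Some a else None.

Lemma get_inlK (A B : eqType) : ocancel (@get_inl A B) inl.
Proof. by case. Qed.

Section Subdivision.
Variables (R : realDomainType) (T I : eqType).
Variables (G : wdigraph T R) (H : wdigraph (T + I)%type R).
Hypothesis wfG : wf G.
Hypothesis adj_inl : forall a b, ~~ adj H (inl a) (inl b).
Hypothesis adj_inr : forall m n, ~~ adj H (inr m) (inr n).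
Hypothesis detour_excess : forall a n b, a != b ->
  adj H (inl a) (inr n) -> adj H (inr n) (inl b) ->
  adj G a b /\ 0 < hext H (inl a) (inr n) + hext H (inr n) (inl b) - hext G a b < 1.

Local Notation lefts := (pmap (@get_inl T I)).

Lemma detour_path_proj a b s :
  uniq (inl a :: s) -> path (adj H) (inl a) s -> last (inl a) s = inl b ->
  [/\ size s = (size (lefts s)).*2, is_path G a b (lefts s) &
      lefts s != [::] ->
      0 < pathW H (inl a) s - pathW G a (lefts s) < (size (lefts s))%:R].
Proof.
have [k] := ubnP (size s); elim: k => // k IHk in a s *.
move=> sk us ps ls.
have ul : uniq (a :: lefts s) := pmap_uniq (@get_inlK T I) us.
case: s => [|[u|n] [|[w|m] s]] //= in sk us ul ps ls *.
  by case: ls => ->; rewrite /is_path /= eqxx.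
1-3, 5: by move: ps; rewrite ?(negbTE (adj_inl _ _)) ?(negbTE (adj_inr _ _)) /= ?andbF.
move: ps us => /and3P[an nw ps] /andP[_ /andP[_ uw]].
have aw : a != w by move: ul; rewrite inE negb_or => /andP[/andP[]].
have [sz pG d] := IHk w s (ltnW sk) uw ps ls.
have [aGw /andP[e0 e1]] := detour_excess aw an nw.
split=> [|{d}|_]; first by rewrite sz doubleS.
  by case/and3P: pG => _ pG lw; rewrite /is_path /= ul aGw pG lw.
rewrite !pathW_cons -addn1 natrD; have [l0 | /d /andP[d0 d1]] := eqVneq (lefts s) [::].
  by move: sz; rewrite l0 => /size0nil ->; rewrite /= !pathW_nil; apply/andP; split; lra.
by apply/andP; split; lra.
Qed.

Hypothesis ccG : curl_consistent G.

Lemma detour_pathW_gt a b s :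
  adj G a b -> is_path H (inl a) (inl b) s -> hext G a b < pathW H (inl a) s.
Proof.
move=> ab /and3P[us ps /eqP ls]; have [_ pG excess] := detour_path_proj us ps ls.
have ne : lefts s != [::].
  apply: contraTneq (adj_neq wfG ab) => l0.
  by move: pG; rewrite l0 => /and3P[_ _ /eqP /= ->]; rewrite eqxx.
have ba : adj G b a by rewrite adjC.
have /andP[+ _] := curl_closed_path_bounds wfG ccG pG ne ba.
have /andP[+ _] := excess ne; case/and3P: pG => _ _ /eqP lb.
by rewrite curl_cons lb; have := hext_add_rev wfG ab; lra.
Qed.

Lemma detour_cycle_curl a r :
  is_wcycle H (inl a :: r) -> 1 < curl H (inl a :: r) < (size (inl a :: r))%:R - 1.
Proof.
case/lastP: r => [|r [y|n]] /and3P[sz u] //;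
  rewrite /cycle !rcons_path last_rcons => /andP[/andP[ps]].
  by move=> _; rewrite (negbTE (adj_inl _ _)).
have us : uniq (inl a :: r) by move: u; rewrite -rcons_cons rcons_uniq => /andP[].
case ls: (last (inl a) r) => [b|m] bn na; last by rewrite (negbTE (adj_inr _ _)) in bn.
have [szr pG excess] := detour_path_proj us ps ls.
have ne : lefts r != [::].
  by apply: contraTneq sz => l0; move/eqP: szr; rewrite l0 /= size_rcons => /nilP ->.
have nba : b != a by rewrite eq_sym (is_path_neq pG ne).
have [ba /andP[e0 e1]] := detour_excess nba bn na.
have /andP[c0 c1] := curl_closed_path_bounds wfG ccG pG ne ba.
have /andP[d0 d1] := excess ne; case/and3P: pG => _ _ /eqP lb.
have -> : size (inl a :: rcons r (inr n)) = ((size (lefts r)).*2 + 2)%N.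
  by rewrite /= size_rcons szr addn2.
rewrite curl_cons last_rcons pathW_rcons ls -muln2 natrD natrM.
rewrite curl_cons lb in c0 c1.
by apply/andP; split; lra.
Qed.

Lemma detour_curl_consistent : curl_consistent H.
Proof.
move=> [|[a|n] r] c; first by case/and3P: c.
  exact: detour_cycle_curl.
case: r c => [|[w|m] r] c; first by case/and3P: c.
  have := @detour_cycle_curl w (rcons r (inr n)).
  by rewrite -rcons_cons curl_rcons size_rcons is_wcycle_rcons; apply.
by case/and3P: c => _ _ /andP[]; rewrite (negbTE (adj_inr _ _)).
Qed.

End Subdivision.

Section ExpertGraph.
Variables (R : realFieldType) (T : eqType) (zeta : R) (G : wdigraph T R).

(* The new vertex inr n subdivides the edge number n./2 of G; the detour through
   inr (2j) is the cheap one forwards, the one through inr (2j+1) backwards.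
   Taking min zeta 1 keeps both shifts eps and 1 - eps inside (0, 1). *)
Definition expert_eps : R := Num.min zeta 1 / 2.

Definition aux_shift (n : nat) : R := if odd n then 1 - expert_eps else expert_eps.

Definition aux_edge (n : nat) : option (T * T) := onth (wedges G) n./2.

Definition aux_range : seq nat := iota 0 (size (wedges G)).*2.

Definition aux_verts : seq (T + nat)%type := map inr aux_range.

Definition aux_gadget (n : nat) : seq ((T + nat)%type * (T + nat)%type) :=
  if aux_edge n is Some (p, q) then [:: (inl p, inr n); (inr n, inl q)] else [::].

Definition expert_wgt (e : (T + nat)%type * (T + nat)%type) : R :=
  if e is (inl _, inr n) then
    if aux_edge n is Some f then wgt G f + aux_shift n else 0
  else 0.

Definition expert_graph : wdigraph (T + nat)%type R :=
  WDigraph (map inl (wverts G) ++ aux_verts) (flatten (map aux_gadget aux_range))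
    expert_wgt.

Local Notation G' := expert_graph.

Lemma aux_shift_bounds n : 0 < zeta -> 0 < aux_shift n < 1.
Proof.
move=> z0; rewrite /aux_shift /expert_eps minEle.
by case: (leP zeta 1) => ?; case: odd; apply/andP; split; lra.
Qed.

Lemma expert_eps_double : 0 < zeta -> 2 * expert_eps <= zeta.
Proof. by move=> z0; rewrite /expert_eps minEle; case: (leP zeta 1) => ?; lra. Qed.

Lemma aux_edge_mem n e : aux_edge n = Some e -> e \in wedges G.
Proof. by move=> ne; apply/onthP; exists n./2. Qed.

Lemma aux_edge_range n e : aux_edge n = Some e -> n \in aux_range.
Proof.
by move=> ne; rewrite mem_iota add0n -ltn_half_double -onthTE [onth _ _]ne.
Qed.

Lemma mem_expert_edges u v :
  reflect (exists n p q, aux_edge n = Some (p, q) /\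
             ((u, v) = (inl p, inr n) \/ (u, v) = (inr n, inl q)))
          ((u, v) \in wedges G').
Proof.
apply: (iffP flatten_mapP) => [[n _]|[n [p [q [ne uv]]]]].
  rewrite /aux_gadget; case ne: (aux_edge n) => [[p q]|] //.
  by rewrite !inE => /orP[] /eqP uv; exists n, p, q; split; auto.
exists n; first exact: aux_edge_range ne.
by rewrite /aux_gadget ne !inE; case: uv => ->; rewrite eqxx ?orbT.
Qed.

Lemma expert_edge_in n p q : aux_edge n = Some (p, q) -> (inl p, inr n) \in wedges G'.
Proof. by move=> ne; apply/mem_expert_edges; exists n, p, q; split; [|left]. Qed.

Lemma expert_edge_out n p q : aux_edge n = Some (p, q) -> (inr n, inl q) \in wedges G'.
Proof. by move=> ne; apply/mem_expert_edges; exists n, p, q; split; [|right]. Qed.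

Lemma expert_adj_inl a b : ~~ adj G' (inl a) (inl b).
Proof. by apply/norP; split; apply/mem_expert_edges => -[n [p [q [_ [[]|[]]]]]]. Qed.

Lemma expert_adj_inr m n : ~~ adj G' (inr m) (inr n).
Proof. by apply/norP; split; apply/mem_expert_edges => -[k [p [q [_ [[]|[]]]]]]. Qed.

Lemma expert_adj_inl_inr a n :
  adj G' (inl a) (inr n) -> exists p q, aux_edge n = Some (p, q) /\ (a = p \/ a = q).
Proof.
by case/orP=> /mem_expert_edges[m [p [q [ne [] [] // ? ?]]]]; subst; exists p, q; auto.
Qed.

Hypothesis wfG : wf G.

Lemma expert_edges_oriented n p q : aux_edge n = Some (p, q) ->
  (inl q, inr n) \notin wedges G' /\ (inr n, inl p) \notin wedges G'.
Proof.
move=> ne; have [pq _ _ _] := wfG (aux_edge_mem ne).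
by split; apply/mem_expert_edges => -[m [p' [q' [ne' [] [] // ? ?]]]]; subst;
  move: ne'; rewrite ne => -[? ?]; subst; rewrite eqxx in pq.
Qed.

Lemma expert_wf : wf G'.
Proof.
move=> u v /mem_expert_edges[n [p [q [ne [] [-> ->]]]]];
  have [_ pV qV _] := wfG (aux_edge_mem ne); have [qn np] := expert_edges_oriented ne;
  rewrite !mem_cat !map_f ?orbT ?(aux_edge_range ne) //.
Qed.

Hypothesis zeta_gt0 : 0 < zeta.

Lemma expert_detour_excess a n b : a != b ->
  adj G' (inl a) (inr n) -> adj G' (inr n) (inl b) ->
  adj G a b /\ 0 < hext G' (inl a) (inr n) + hext G' (inr n) (inl b) - hext G a b < 1.
Proof.
move=> ab /expert_adj_inl_inr[p [q [ne ha]]].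
rewrite adjC => /expert_adj_inl_inr[p' [q' []]]; rewrite ne => -[<- <-] hb.
have pqE := aux_edge_mem ne; have /andP[s0 s1] := aux_shift_bounds n zeta_gt0.
have [pn nq] := (expert_edge_in ne, expert_edge_out ne).
case: ha hb => -> [] -> in ab *; rewrite ?eqxx // in ab.
  split; first by rewrite /adj pqE.
  by rewrite (hext_edge pn) (hext_edge nq) (hext_edge pqE) /= ne; apply/andP; split; lra.
split; first by rewrite /adj pqE orbT.
rewrite (hext_rev_edge expert_wf pn) (hext_rev_edge expert_wf nq).
rewrite (hext_rev_edge wfG pqE) /= ne.
by apply/andP; split; lra.
Qed.

Lemma aux_edge_double j e :
  onth (wedges G) j = Some e -> aux_edge j.*2 = Some e /\ aux_edge j.*2.+1 = Some e.
Proof. by rewrite /aux_edge -[(j.*2.+1)./2]/(uphalf j.*2) uphalf_double doubleK. Qed.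

Lemma expert_path_forward p q : (p, q) \in wedges G ->
  exists2 s, is_path G' (inl p) (inl q) s &
    pathW G' (inl p) s = wgt G (p, q) + expert_eps.
Proof.
move=> pqE; have [pq _ _ _] := wfG pqE.
have [j /aux_edge_double[ne _]] := onthP pqE.
have [pn nq] := (expert_edge_in ne, expert_edge_out ne).
exists [:: inr j.*2; inl q].
  by rewrite /is_path /= !inE /adj pn nq /= eqxx !andbT; apply: contra pq => /eqP[->].
rewrite !pathW_cons pathW_nil (hext_edge pn) (hext_edge nq) /= ne.
by rewrite /aux_shift odd_double !addr0.
Qed.

Lemma expert_path_backward p q : (p, q) \in wedges G ->
  exists2 s, is_path G' (inl q) (inl p) s &
    pathW G' (inl q) s = 1 - wgt G (p, q) + expert_eps.
Proof.
move=> pqE; have [pq _ _ _] := wfG pqE.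
have [j /aux_edge_double[_ ne]] := onthP pqE.
have [pn nq] := (expert_edge_in ne, expert_edge_out ne).
exists [:: inr j.*2.+1; inl p].
  by rewrite /is_path /= !inE /adj pn nq /= !orbT eqxx !andbT; apply: contra pq => /eqP[->].
rewrite !pathW_cons pathW_nil (hext_rev_edge expert_wf pn) (hext_rev_edge expert_wf nq).
by rewrite /= ne /aux_shift /= odd_double /=; ring.
Qed.

End ExpertGraph.

Theorem lemma4 (R : realFieldType) (T : eqType) (zeta : R) (G : wdigraph T R) :
  0 < zeta -> wf G -> curl_consistent G ->
  exists (G' : wdigraph (T + nat)%type R) (Y' : seq (T + nat)%type),
    [/\ wf G',
        [/\
        (* vertex set of G' is Y u Y', with Y' n Y empty *)
        (forall v, (v \in wverts G') = (v \in map inl (wverts G)) || (v \in Y')),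
        (forall v, v \in Y' -> v \notin map inl (wverts G)) &
        (* E n E' empty *)
        (forall e, e \in wedges G -> (inl e.1, inl e.2) \notin wedges G')],
        (* (1) *)
        (forall e, e \in wedges G ->
           [/\ synth_defined G' (inl e.1) (inl e.2),
               zeta_accurate G' (inl e.1) (inl e.2) zeta &
               in_bound_interval G' (inl e.1) (inl e.2) (wgt G e)])
      & (* (2) *) curl_consistent G'].
Proof.
move=> zeta_gt0 wfG ccG.
have wf' : wf (expert_graph zeta G) := expert_wf wfG.
have no_inl := @expert_adj_inl _ _ zeta G; have no_inr := @expert_adj_inr _ _ zeta G.
have excess := expert_detour_excess wfG zeta_gt0.
exists (expert_graph zeta G), (aux_verts G); split=> //.
- split=> [v | _ /mapP[n _ ->] | e _]; first by rewrite mem_cat.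
    by apply/mapP => -[].
  by apply: contraNN (no_inl e.1 e.2) => ee; rewrite /adj ee.
- move=> [p q] pqE /=.
  have [s ps Ws] := expert_path_forward zeta wfG pqE.
  have [t pt Wt] := expert_path_backward zeta wfG pqE.
  have [U minU] := min_pathW_exists wf' ps; have [[s' [ps' Us']] Umin] := minU.
  have [M minM] := min_pathW_exists wf' pt; have [[t' [pt' Mt']] Mmin] := minM.
  split; first exact: no_inl.
    exists U, M; split=> //.
    by have := Umin s ps; have := Mmin t pt; have := expert_eps_double zeta_gt0; lra.
  exists U, M; split=> //.
  have pq : adj G p q by rewrite /adj pqE.
  have qp : adj G q p by rewrite adjC.
  have := detour_pathW_gt wfG no_inl no_inr excess ccG pq ps'.
  have := detour_pathW_gt wfG no_inl no_inr excess ccG qp pt'.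
  by rewrite (hext_edge pqE) (hext_rev_edge wfG pqE) Us' Mt'; lra.
exact: detour_curl_consistent wfG no_inl no_inr excess ccG.
Qed.
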